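(* Let $n\ge 3$. An $n$-element subset $V\subseteq\mathbb R$ is optimal for $3$-term arithmetic progressions if and only if there is a similarity $f$ of $\mathbb R$ such that $f(V)=E\cup O$, where $E$ is a nonempty set of consecutive even integers, $O$ is a nonempty set of consecutive odd integers, and $E$ and $O$ are concentric if $n$ is odd, and nearly concentric if $n$ is even.
   Context: A $k$-term arithmetic progression is a set $\{a,a+d,\dots,a+(k-1)d\}\subseteq\mathbb R$ with $d>0$; $S_{\mathcal A_k}(V)$ denotes the number of $k$-term arithmetic progressions contained in $V$. An $n$-set $V\subseteq\mathbb R$ is optimal for $k$-term arithmetic progressions if $S_{\mathcal A_k}(V)$ equals the maximum of $S_{\mathcal A_k}(W)$ over all $n$-subsets $W\subseteq\mathbb R$, which equals $(n-r)(n+r-k+1)/(2k-2)$ with $r$ the remainder of $n$ modulo $k-1$. A similarity of $\mathbb R$ is a map $x\mapsto ax+b$ with $a\neq0$. A set of consecutive even (resp. odd) integers is a set $\{c,c+2,c+4,\dots,c+2m\}$ with $c$ even (resp. odd) and $m\ge0$. The barycenter of a finite arithmetic progression is the arithmetic mean of its elements; $E$ and $O$ are concentric if their barycenters are equal, and nearly concentric if their barycenters differ by exactly $1$. *)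

(* classical reals. Finite subsets of R are represented as
   duplicate-free lists. *)
From Stdlib Require Import Reals Lra ZArith List Bool.
Import ListNotations.
Open Scope R_scope.
Open Scope bool_scope.

Definition inR (x : R) (l : list R) : bool :=
  if in_dec Req_EM_T x l then true else false.

(* S_{A_3}(V): number of 3-term APs {a, a+d, a+2d} (d > 0) contained in V.
   Such a progression is determined by the pair (a, a+d) of its two smallest
   elements, so we count pairs (a, b) in V x V with d := b - a > 0 and
   a + 2d in V. *)
Definition S3 (V : list R) : nat :=
  length (filter (fun p : R * R =>
            let a := fst p in let d := snd p - fst p in
            (if Rlt_dec 0 d then true else false) && inR (a + 2 * d) V)
          (list_prod V V)).

Definition optimal3 (V : list R) : Prop :=
  forall W : list R, NoDup W -> length W = length V -> (S3 W <= S3 V)%nat.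

Definition similarity (f : R -> R) : Prop :=
  exists a b : R, a <> 0 /\ forall x, f x = a * x + b.

Definition consec_from (c : Z) (m : nat) : list R :=
  map (fun j => IZR (c + 2 * Z.of_nat j)) (seq 0 (S m)).

Definition consec_even (E : list R) : Prop :=
  exists (c : Z) (m : nat), Z.Even c /\ E = consec_from c m.

Definition consec_odd (O : list R) : Prop :=
  exists (c : Z) (m : nat), Z.Odd c /\ O = consec_from c m.

Definition barycenter (l : list R) : R :=
  fold_right Rplus 0 l / INR (length l).

Definition concentric (E O : list R) : Prop := barycenter E = barycenter O.
Definition nearly_concentric (E O : list R) : Prop :=
  Rabs (barycenter E - barycenter O) = 1.

(* Write [S3 V] as the sum over [b] in [V] of the number of [a < b] with [2b - a] in [V].
   Reflection through [b] shows that this is also the number of such [a > b], hence at most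
   the minimum of the numbers of elements below and above [b]; summing over the ranks of the
   elements gives a bound attained by [{0, ..., n-1}].  So [V] is optimal iff it is balanced:
   every [b] in [V] mirrors into [V] either all smaller or all larger elements of [V].

   A balanced set stays balanced when its minimum and maximum are removed, so by induction an
   affine image of the interior is a union [E ∪ O] of consecutive even and odd integers with
   centres at distance at most 1.  Mirroring the two new extreme points through the extreme
   points of [E ∪ O] shows that their images are integers, and mirroring them through the
   central points forces them to prolong [E] or [O] so that the centres stay that close.
   Conversely such a union is balanced: points up to the lower centre mirror the smaller
   elements, the others the larger ones. *)

From Stdlib Require Import Reals ZArith List Lra Lia Permutation Sorting.Sorted.
Import ListNotations.
Open Scope R_scope.

Definition ltb (x y : R) : bool := if Rlt_dec x y then true else false.

Lemma ltbP x y : reflect (x < y) (ltb x y).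
Proof. unfold ltb; destruct Rlt_dec; constructor; assumption. Qed.

Lemma ltb_spec x y : ltb x y = true <-> x < y.
Proof. destruct (ltbP x y); split; congruence || tauto. Qed.

Lemma inR_spec x l : inR x l = true <-> In x l.
Proof. unfold inR; destruct in_dec; split; congruence || tauto. Qed.

Lemma list_sum_map_add {A} (f g : A -> nat) l :
  list_sum (map (fun x => (f x + g x)%nat) l) = (list_sum (map f l) + list_sum (map g l))%nat.
Proof. induction l; simpl; lia. Qed.

Lemma list_sum_map_le {A} (f g : A -> nat) l :
  (forall x, In x l -> f x <= g x)%nat -> (list_sum (map f l) <= list_sum (map g l))%nat.
Proof.
  induction l as [|a l IH]; simpl; intros H; [lia|].
  specialize (H a (or_introl eq_refl)) as Ha. specialize (IH (fun x Hx => H x (or_intror Hx))). lia.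
Qed.

Lemma list_sum_map_le_eq {A} (f g : A -> nat) l :
  (forall x, In x l -> f x <= g x)%nat -> list_sum (map f l) = list_sum (map g l) ->
  forall x, In x l -> f x = g x.
Proof.
  induction l as [|a l IH]; simpl; intros Hle Heq x Hx; [contradiction|].
  assert (Ha := Hle a (or_introl eq_refl)).
  assert (Hl := list_sum_map_le f g l (fun y Hy => Hle y (or_intror Hy))).
  destruct Hx as [<-|Hx]; [lia|].
  apply IH; auto; lia.
Qed.

Lemma length_filter_le {A} (p q : A -> bool) l :
  (forall x, In x l -> p x = true -> q x = true) ->
  (length (filter p l) <= length (filter q l))%nat.
Proof.
  induction l as [|a l IH]; simpl; intros H; [lia|].
  specialize (IH (fun x Hx => H x (or_intror Hx))).
  destruct (p a) eqn:Ha; [rewrite (H a (or_introl eq_refl) Ha); simpl; lia|].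
  destruct (q a); simpl; lia.
Qed.

Lemma length_filter_andb_eq {A} (p q : A -> bool) l :
  length (filter (fun x => p x && q x) l) = length (filter p l) ->
  forall x, In x l -> p x = true -> q x = true.
Proof.
  induction l as [|a l IH]; simpl; intros E x Hx Hp; [contradiction|].
  assert (Hle := length_filter_le (fun x => p x && q x) p l
                   (fun y _ H => proj1 (andb_prop _ _ H))).
  destruct Hx as [<-|Hx].
  - rewrite Hp in E. destruct (q a); simpl in E; [reflexivity|lia].
  - destruct (p a), (q a); simpl in E; apply IH; auto; lia.
Qed.

Lemma length_filter_list_prod {A B} (P : A * B -> bool) l1 l2 :
  length (filter P (list_prod l1 l2)) =
  list_sum (map (fun y => length (filter (fun x => P (x, y)) l1)) l2).
Proof.
  induction l1 as [|a l1 IH]; simpl.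
  - induction l2; simpl; auto.
  - rewrite filter_app, length_app, IH.
    transitivity (list_sum (map (fun y => if P (a, y) then 1%nat else 0%nat) l2) +
                  list_sum (map (fun y => length (filter (fun x => P (x, y)) l1)) l2))%nat.
    + f_equal. clear IH. induction l2 as [|b l2 IH2]; simpl; auto.
      destruct (P (a, b)); simpl; rewrite IH2; reflexivity.
    + rewrite <- list_sum_map_add. f_equal. apply map_ext. intros y.
      destruct (P (a, y)); reflexivity.
Qed.

Lemma Permutation_filter {A} (p : A -> bool) l l' :
  Permutation l l' -> Permutation (filter p l) (filter p l').
Proof.
  induction 1; simpl; auto.
  - destruct (p x); auto.
  - destruct (p x), (p y); auto using perm_swap.
  - eauto using perm_trans.
Qed.

Fixpoint insert (x : R) (s : list R) : list R :=
  match s with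
  | [] => [x]
  | y :: s' => if Rlt_dec x y then x :: s else y :: insert x s'
  end.

Lemma insert_perm x s : Permutation (x :: s) (insert x s).
Proof.
  induction s as [|y s IH]; simpl; auto.
  destruct Rlt_dec; auto. eapply perm_trans; [apply perm_swap|]. auto.
Qed.

Lemma insert_sorted x s : ~ In x s -> StronglySorted Rlt s -> StronglySorted Rlt (insert x s).
Proof.
  induction s as [|y s IH]; simpl; intros Hx Hs; [repeat constructor|].
  apply StronglySorted_inv in Hs as [Hs Hy]. destruct Rlt_dec as [Hxy|Hxy].
  - constructor; [constructor; auto|]. constructor; auto.
    eapply Forall_impl; [|exact Hy]. simpl; intros; lra.
  - assert (y < x) by (destruct (Req_dec x y); [subst; tauto|lra]).
    constructor; auto. eapply Permutation_Forall; [apply insert_perm|]. constructor; auto.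
Qed.

Lemma sorted_permutation l : NoDup l -> exists s, Permutation l s /\ StronglySorted Rlt s.
Proof.
  induction 1 as [|x l Hx _ [s [Hp Hs]]]; [exists []; split; constructor|].
  exists (insert x s). split.
  - eapply perm_trans; [|apply insert_perm]. constructor; exact Hp.
  - apply insert_sorted; auto. intros Hxs. apply Hx. eapply Permutation_in; [symmetry|]; eauto.
Qed.

Lemma StronglySorted_app_inv {A} (Rel : A -> A -> Prop) l1 l2 :
  StronglySorted Rel (l1 ++ l2) ->
  StronglySorted Rel l1 /\ StronglySorted Rel l2 /\ forall x y, In x l1 -> In y l2 -> Rel x y.
Proof.
  induction l1 as [|a l1 IH]; simpl; intros H.
  - repeat split; [constructor|exact H|contradiction].
  - apply StronglySorted_inv in H as [H Ha]. rewrite Forall_forall in Ha.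
    destruct (IH H) as (H1 & H2 & H12). repeat split; auto.
    + constructor; [exact H1|]. apply Forall_forall. intros; apply Ha, in_or_app; auto.
    + intros x y [<-|Hx] Hy; auto. apply Ha, in_or_app; auto.
Qed.

(** * The upper bound and its equality case *)

Definition below (V : list R) (b : R) : nat := length (filter (fun a => ltb a b) V).

Definition above (V : list R) (b : R) : nat := length (filter (fun a => ltb b a) V).

Definition mirrored_below (V : list R) (b : R) : nat :=
  length (filter (fun a => ltb a b && inR (2 * b - a) V) V).

Definition mirrored_above (V : list R) (b : R) : nat :=
  length (filter (fun a => ltb b a && inR (2 * b - a) V) V).

Lemma S3_sum_mirrored_below V : S3 V = list_sum (map (mirrored_below V) V).
Proof.
  unfold S3. rewrite length_filter_list_prod. f_equal. apply map_ext. intros b.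
  unfold mirrored_below. f_equal. apply filter_ext. intros a. simpl.
  replace (a + 2 * (b - a)) with (2 * b - a) by ring.
  unfold ltb. destruct (Rlt_dec 0 (b - a)), (Rlt_dec a b); reflexivity || lra.
Qed.

Lemma length_filter_mirror (p q : R -> bool) V b : NoDup V ->
  (forall a, p a = true -> q (2 * b - a) = true) ->
  (length (filter (fun a => p a && inR (2 * b - a) V) V) <=
   length (filter (fun a => q a && inR (2 * b - a) V) V))%nat.
Proof.
  intros ND Hpq. rewrite <- (length_map (fun a => 2 * b - a)).
  apply NoDup_incl_length.
  - apply FinFun.Injective_map_NoDup; [intros x y E; lra|]. apply NoDup_filter, ND.
  - intros y Hy. apply in_map_iff in Hy as [a [<- Ha]].
    apply filter_In in Ha as [Ha Hpa]. apply andb_prop in Hpa as [Hp Hin].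
    apply filter_In. rewrite inR_spec in Hin. split; [exact Hin|].
    rewrite Hpq by exact Hp. apply inR_spec. replace (2 * b - (2 * b - a)) with a by ring.
    exact Ha.
Qed.

Lemma mirrored_below_eq_above V b : NoDup V -> mirrored_below V b = mirrored_above V b.
Proof.
  intros ND. apply Nat.le_antisymm; apply length_filter_mirror; auto;
    intros a Ha; apply ltb_spec; apply ltb_spec in Ha; lra.
Qed.

Lemma mirrored_below_le_min V b :
  NoDup V -> (mirrored_below V b <= Nat.min (below V b) (above V b))%nat.
Proof.
  intros ND.
  assert (Hb : (mirrored_below V b <= below V b)%nat).
  { apply length_filter_le. intros a _ H. apply andb_prop in H; tauto. }
  assert (Ha : (mirrored_above V b <= above V b)%nat).
  { apply length_filter_le. intros a _ H. apply andb_prop in H; tauto. }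
  rewrite (mirrored_below_eq_above V b ND) in Hb |- *. lia.
Qed.

Lemma below_add_above_notin V b : ~ In b V -> (below V b + above V b)%nat = length V.
Proof.
  unfold below, above. induction V as [|a V IH]; simpl; intros Hb; [reflexivity|].
  specialize (IH (fun H => Hb (or_intror H))).
  destruct (ltbP a b), (ltbP b a); simpl; try lia; exfalso; [lra|].
  apply Hb; left; lra.
Qed.

Lemma below_add_above V b : NoDup V -> In b V -> (below V b + above V b)%nat = pred (length V).
Proof.
  intros ND Hb. apply in_split in Hb as (l1 & l2 & ->).
  apply NoDup_remove_2 in ND.
  replace (pred (length (l1 ++ b :: l2))) with (length (l1 ++ l2)) by (rewrite !length_app; simpl; lia).
  rewrite <- (below_add_above_notin _ _ ND).
  unfold below, above. rewrite !filter_app, !length_app. simpl.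
  destruct (ltbP b b); [lra|]. simpl. lia.
Qed.

Lemma below_sorted s : StronglySorted Rlt s -> map (below s) s = seq 0 (length s).
Proof.
  induction 1 as [|x s _ IH Hx]; [reflexivity|]. rewrite Forall_forall in Hx.
  simpl. f_equal.
  - unfold below; simpl. destruct (ltbP x x); [lra|].
    destruct (filter (fun a => ltb a x) s) as [|y l] eqn:E; [reflexivity|].
    assert (Hy : In y (filter (fun a => ltb a x) s)) by (rewrite E; left; reflexivity).
    apply filter_In in Hy as [Hy Hyx]. apply ltb_spec in Hyx. specialize (Hx y Hy). lra.
  - rewrite <- seq_shift, <- IH, map_map. apply map_ext_in. intros y Hy.
    unfold below; simpl. destruct (ltbP x y); [reflexivity|]. specialize (Hx y Hy). lra.
Qed.

Lemma below_perm V V' b : Permutation V V' -> below V b = below V' b.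
Proof. intros H. apply Permutation_length, Permutation_filter, H. Qed.

Definition ap3_bound (n : nat) : nat := list_sum (map (fun i => Nat.min i (pred n - i)) (seq 0 n)).

Lemma sum_min_below_above V : NoDup V ->
  list_sum (map (fun b => Nat.min (below V b) (above V b)) V) = ap3_bound (length V).
Proof.
  intros ND. destruct (sorted_permutation V ND) as [s [Hp Hs]].
  rewrite (map_ext_in _ (fun b => Nat.min (below s b) (pred (length s) - below s b))).
  - rewrite (Permutation_list_sum (Permutation_map _ Hp)).
    rewrite <- (map_map (below s) (fun i => Nat.min i (pred (length s) - i))), below_sorted by exact Hs.
    unfold ap3_bound. now rewrite (Permutation_length Hp).
  - intros b Hb. rewrite <- (below_perm _ _ b Hp), <- (Permutation_length Hp).
    pose proof (below_add_above V b ND Hb). lia.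
Qed.

Definition balanced (P : R -> Prop) : Prop :=
  forall b, P b ->
  (forall a, P a -> a < b -> P (2 * b - a)) \/ (forall a, P a -> b < a -> P (2 * b - a)).

Lemma S3_le_ap3_bound V : NoDup V -> (S3 V <= ap3_bound (length V))%nat.
Proof.
  intros ND. rewrite S3_sum_mirrored_below, <- sum_min_below_above by exact ND.
  apply list_sum_map_le. intros b _. apply mirrored_below_le_min, ND.
Qed.

Lemma S3_eq_ap3_bound_iff V : NoDup V ->
  S3 V = ap3_bound (length V) <-> balanced (fun x => In x V).
Proof.
  intros ND. rewrite S3_sum_mirrored_below, <- sum_min_below_above by exact ND. split.
  - intros E b Hb.
    assert (Eb := list_sum_map_le_eq _ _ _ (fun b _ => mirrored_below_le_min V b ND) E b Hb).
    cbv beta in Eb. pose proof (mirrored_below_eq_above V b ND).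
    destruct (Nat.le_ge_cases (below V b) (above V b)); [left|right]; intros a Ha Hab;
      apply inR_spec.
    + apply (length_filter_andb_eq (fun a => ltb a b) (fun a => inR (2 * b - a) V) V);
        [change (mirrored_below V b = below V b); lia|assumption|apply ltb_spec, Hab].
    + apply (length_filter_andb_eq (fun a => ltb b a) (fun a => inR (2 * b - a) V) V);
        [change (mirrored_above V b = above V b); lia|assumption|apply ltb_spec, Hab].
  - intros Hbal. apply Nat.le_antisymm.
    + apply list_sum_map_le. intros b _. apply mirrored_below_le_min, ND.
    + apply list_sum_map_le. intros b Hb.
      assert (Hfull : forall p : R -> bool, (forall a, In a V -> p a = true -> In (2 * b - a) V) ->
                length (filter (fun a => p a && inR (2 * b - a) V) V) = length (filter p V)).
      { intros p Hp. f_equal. apply filter_ext_in. intros a Ha.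
        destruct (p a) eqn:E; [apply inR_spec; auto|reflexivity]. }
      destruct (Hbal b Hb) as [L|U].
      * assert (mirrored_below V b = below V b)
          by (apply Hfull; intros a Ha Hab; apply L, ltb_spec; auto). lia.
      * assert (mirrored_above V b = above V b)
          by (apply Hfull; intros a Ha Hab; apply U, ltb_spec; auto).
        rewrite (mirrored_below_eq_above V b ND). lia.
Qed.

Lemma balanced_range n : balanced (fun x => In x (map INR (seq 0 n))).
Proof.
  intros b Hb. apply in_map_iff in Hb as [k [<- Hk]]. apply in_seq in Hk.
  assert (Hrefl : forall j, (j < n)%nat -> (j <= 2 * k)%nat -> (2 * k - j < n)%nat ->
            In (2 * INR k - INR j) (map INR (seq 0 n))).
  { intros j Hj Hjk Hn. apply in_map_iff. exists (2 * k - j)%nat. split.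
    - rewrite minus_INR, mult_INR by exact Hjk. reflexivity.
    - apply in_seq. lia. }
  destruct (le_lt_dec (2 * k) (pred n)); [left|right]; intros a Ha Hab;
    apply in_map_iff in Ha as [j [<- Hj]]; apply in_seq in Hj; apply INR_lt in Hab;
    apply Hrefl; lia.
Qed.

Lemma optimal3_iff_balanced V : NoDup V -> optimal3 V <-> balanced (fun x => In x V).
Proof.
  intros ND. rewrite <- S3_eq_ap3_bound_iff by exact ND.
  assert (NDr : NoDup (map INR (seq 0 (length V))))
    by (apply FinFun.Injective_map_NoDup; [exact INR_eq|apply seq_NoDup]).
  assert (Lr : length (map INR (seq 0 (length V))) = length V)
    by (rewrite length_map, length_seq; reflexivity).
  assert (Er : S3 (map INR (seq 0 (length V))) = ap3_bound (length V)).
  { rewrite <- Lr at 2. apply S3_eq_ap3_bound_iff, balanced_range. exact NDr. }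
  split.
  - intros Hopt. apply Nat.le_antisymm; [apply S3_le_ap3_bound, ND|].
    rewrite <- Er. apply Hopt; assumption.
  - intros E W NDW LW. rewrite E, <- LW. apply S3_le_ap3_bound, NDW.
Qed.

(** * Balanced sets under affine maps *)

Lemma balanced_ext (P P' : R -> Prop) : (forall x, P x <-> P' x) -> balanced P -> balanced P'.
Proof.
  intros E H b Hb. apply E in Hb.
  destruct (H b Hb) as [L|U]; [left|right]; intros a Ha Hab; apply E;
    [apply L|apply U]; auto; apply E; exact Ha.
Qed.

Lemma balanced_affine_preimage (P : R -> Prop) al be : al <> 0 -> balanced P ->
  balanced (fun x => P (al * x + be)).
Proof.
  intros Hal H b Hb.
  assert (Hrefl : forall a, al * (2 * b - a) + be = 2 * (al * b + be) - (al * a + be)) by (intros; ring).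
  destruct (Rlt_or_le 0 al) as [Hp|Hn].
  - destruct (H _ Hb) as [L|U]; [left|right]; intros a Ha Hab; rewrite Hrefl;
      [apply L|apply U]; auto; apply Rplus_lt_compat_r, Rmult_lt_compat_l; assumption.
  - assert (Hn' : 0 < - al) by (destruct Hn; lra).
    destruct (H _ Hb) as [L|U]; [right|left]; intros a Ha Hab; rewrite Hrefl;
      [apply L|apply U]; auto; nra.
Qed.

Lemma in_map_affine al be V y : al <> 0 ->
  In y (map (fun x => al * x + be) V) <-> In ((y - be) / al) V.
Proof.
  intros Hal. rewrite in_map_iff. split.
  - intros [x [<- Hx]]. replace ((al * x + be - be) / al) with x by (field; exact Hal). exact Hx.
  - intros Hx. eexists; split; [|exact Hx]. field. exact Hal.
Qed.

Lemma in_map_affine_iff al be V (Q : R -> Prop) : al <> 0 ->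
  (forall x, In x V <-> Q (al * x + be)) <->
  (forall y, In y (map (fun x => al * x + be) V) <-> Q y).
Proof.
  intros Hal. split; intros H y.
  - rewrite in_map_affine, H by exact Hal.
    replace (al * ((y - be) / al) + be) with y by (field; exact Hal). reflexivity.
  - rewrite <- H, in_map_affine by exact Hal.
    replace ((al * y + be - be) / al) with y by (field; exact Hal). reflexivity.
Qed.

(** * Unions of an even and an odd progression *)

Open Scope Z_scope.

Definition in_ap2 (c : Z) (m : nat) (z : Z) : Prop :=
  c <= z <= c + 2 * Z.of_nat m /\ (z - c) mod 2 = 0.

Definition evens_odds (c : Z) (m : nat) (c' : Z) (m' : nat) (z : Z) : Prop :=
  in_ap2 c m z \/ in_ap2 c' m' z.

(* [c + m] and [c' + m'] are the centres of the two progressions. *)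
Definition near_centred (c : Z) (m : nat) (c' : Z) (m' : nat) : Prop :=
  c mod 2 = 0 /\ c' mod 2 = 1 /\ Z.abs (c + Z.of_nat m - (c' + Z.of_nat m')) <= 1.

Definition balancedZ (Q : Z -> Prop) : Prop :=
  forall b, Q b ->
  (forall a, Q a -> a < b -> Q (2 * b - a)) \/ (forall a, Q a -> b < a -> Q (2 * b - a)).

Lemma evens_odds_balanced c m c' m' :
  near_centred c m c' m' -> balancedZ (evens_odds c m c' m').
Proof.
  unfold near_centred, balancedZ, evens_odds, in_ap2. intros Hc b Hb.
  destruct (Z_le_gt_dec b (Z.min (c + Z.of_nat m) (c' + Z.of_nat m'))); [left|right];
    intros a Ha Hab; Z.div_mod_to_equations; lia.
Qed.

(* The four ways of prolonging the progressions by one point below and one above that keep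
   their centres at distance at most 1. *)
Definition admissible_ends (c : Z) (m : nat) (c' : Z) (m' : nat) (U V : Z) : Prop :=
  (U = c - 2 /\ V = c + 2 * Z.of_nat m + 2) \/
  (U = c' - 2 /\ V = c' + 2 * Z.of_nat m' + 2) \/
  (U = c - 2 /\ V = c' + 2 * Z.of_nat m' + 2 /\ c + Z.of_nat m = c' + Z.of_nat m' + 1) \/
  (U = c' - 2 /\ V = c + 2 * Z.of_nat m + 2 /\ c' + Z.of_nat m' = c + Z.of_nat m + 1).

(* Mirroring through the two central points already determines [U] and [V]. *)
Lemma admissible_ends_of_central_mirrors c m c' m' U V :
  near_centred c m c' m' ->
  U < Z.min c c' -> Z.max (c + 2 * Z.of_nat m) (c' + 2 * Z.of_nat m') < V ->
  (forall x, x = Z.min (c + Z.of_nat m) (c' + Z.of_nat m') \/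
             x = Z.min (c + Z.of_nat m) (c' + Z.of_nat m') + 1 ->
     evens_odds c m c' m' (2 * x - U) \/ evens_odds c m c' m' (2 * x - V) \/ U + V = 2 * x) ->
  admissible_ends c m c' m' U V.
Proof.
  unfold admissible_ends, near_centred, evens_odds, in_ap2. intros [Hc [Hc' Hr]] HU HV Hx.
  pose proof (Hx _ (or_introl eq_refl)) as F1. pose proof (Hx _ (or_intror eq_refl)) as F2.
  clear Hx.
  assert (Hcases : c + Z.of_nat m = c' + Z.of_nat m' \/ c + Z.of_nat m = c' + Z.of_nat m' + 1 \/
                   c' + Z.of_nat m' = c + Z.of_nat m + 1) by lia.
  destruct Hcases as [Hr'|[Hr'|Hr']];
  [replace (Z.min (c + Z.of_nat m) (c' + Z.of_nat m')) with (c + Z.of_nat m) in * by lia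
  |replace (Z.min (c + Z.of_nat m) (c' + Z.of_nat m')) with (c' + Z.of_nat m') in * by lia
  |replace (Z.min (c + Z.of_nat m) (c' + Z.of_nat m')) with (c + Z.of_nat m) in * by lia];
  destruct F1 as [[F1|F1]|[[F1|F1]|F1]]; destruct F2 as [[F2|F2]|[[F2|F2]|F2]];
  Z.div_mod_to_equations;
  first [ left; split; lia | right; left; split; lia
        | right; right; left; split; [|split]; lia | do 3 right; split; [|split]; lia ].
Qed.

Lemma evens_odds_add_ends c m c' m' U V :
  near_centred c m c' m' ->
  admissible_ends c m c' m' U V ->
  exists c2 m2 c2' m2', near_centred c2 m2 c2' m2' /\
    forall z, z = U \/ evens_odds c m c' m' z \/ z = V <-> evens_odds c2 m2 c2' m2' z.
Proof.
  unfold admissible_ends, near_centred, evens_odds, in_ap2.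
  intros Hc [[-> ->]|[[-> ->]|[[-> [-> ?]]|[-> [-> ?]]]]].
  - exists (c - 2), (S (S m)), c', m'. split; [|intros z; split]; Z.div_mod_to_equations; lia.
  - exists c, m, (c' - 2), (S (S m')). split; [|intros z; split]; Z.div_mod_to_equations; lia.
  - exists (c - 2), (S m), c', (S m'). split; [|intros z; split]; Z.div_mod_to_equations; lia.
  - exists c, (S m), (c' - 2), (S m'). split; [|intros z; split]; Z.div_mod_to_equations; lia.
Qed.

Lemma evens_odds_extend c m c' m' U V :
  near_centred c m c' m' ->
  (forall z, evens_odds c m c' m' z -> U < z < V) ->
  balancedZ (fun z => z = U \/ evens_odds c m c' m' z \/ z = V) ->
  exists c2 m2 c2' m2', near_centred c2 m2 c2' m2' /\
    forall z, z = U \/ evens_odds c m c' m' z \/ z = V <-> evens_odds c2 m2 c2' m2' z.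
Proof.
  intros Hc Hbnd Hbal. apply evens_odds_add_ends; [exact Hc|].
  assert (Hends : evens_odds c m c' m' c /\ evens_odds c m c' m' c' /\
     evens_odds c m c' m' (c + 2 * Z.of_nat m) /\ evens_odds c m c' m' (c' + 2 * Z.of_nat m') /\
     evens_odds c m c' m' (Z.min (c + Z.of_nat m) (c' + Z.of_nat m')) /\
     evens_odds c m c' m' (Z.min (c + Z.of_nat m) (c' + Z.of_nat m') + 1)).
  { unfold near_centred, evens_odds, in_ap2 in *. Z.div_mod_to_equations. lia. }
  destruct Hends as (H1 & H2 & H3 & H4 & Ht & Ht1).
  apply admissible_ends_of_central_mirrors; [exact Hc| | |].
  - pose proof (Hbnd _ H1). pose proof (Hbnd _ H2). lia.
  - pose proof (Hbnd _ H3). pose proof (Hbnd _ H4). lia.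
  - intros x Hx. assert (Hx' : evens_odds c m c' m' x) by (destruct Hx as [-> | ->]; assumption).
    destruct (Hbnd x Hx') as [HUx HxV].
    destruct (Hbal x (or_intror (or_introl Hx'))) as [L|R].
    + destruct (L U (or_introl eq_refl) HUx) as [E|[E|E]]; [lia|now left|right; right; lia].
    + destruct (R V (or_intror (or_intror eq_refl)) HxV) as [E|[E|E]]; [|now right; left|]; lia.
Qed.

Close Scope Z_scope.

(** * Balanced sets are affine images of such unions *)

Definition Zset (Q : Z -> Prop) (y : R) : Prop := exists z, y = IZR z /\ Q z.

Lemma Zset_IZR (Q : Z -> Prop) z : Zset Q (IZR z) <-> Q z.
Proof. split; [intros [w [E H]]; apply eq_IZR in E; subst; exact H|intros; exists z; auto]. Qed.

Lemma IZR_reflect a b : 2 * IZR b - IZR a = IZR (2 * b - a).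
Proof. rewrite minus_IZR, mult_IZR. reflexivity. Qed.

Lemma balanced_Zset_iff (Q : Z -> Prop) : balanced (Zset Q) <-> balancedZ Q.
Proof.
  split.
  - intros H b Hb. destruct (H (IZR b) (proj2 (Zset_IZR Q b) Hb)) as [L|U]; [left|right];
      intros a Ha Hab; apply Zset_IZR; rewrite <- IZR_reflect;
      [apply L|apply U]; try apply Zset_IZR; auto; apply IZR_lt, Hab.
  - intros H y [b [-> Hb]]. destruct (H b Hb) as [L|U]; [left|right];
      intros y [a [-> Ha]] Hab; rewrite IZR_reflect; apply Zset_IZR;
      [apply L|apply U]; auto; apply lt_IZR, Hab.
Qed.

Lemma In_consec_from c m y : In y (consec_from c m) <-> Zset (in_ap2 c m) y.
Proof.
  unfold consec_from, Zset, in_ap2. rewrite in_map_iff. split.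
  - intros [j [<- Hj]]. apply in_seq in Hj. exists (c + 2 * Z.of_nat j)%Z.
    split; [reflexivity|]. split; [lia|]. Z.div_mod_to_equations. lia.
  - intros [z [-> [Hz Hmod]]]. exists (Z.to_nat ((z - c) / 2)). split.
    + f_equal. Z.div_mod_to_equations. lia.
    + apply in_seq. Z.div_mod_to_equations. lia.
Qed.

(* [lo] can only mirror [U], into [Q] or onto [V]; likewise [hi] can only mirror [V]. *)
Lemma balanced_ends_integral (Q : Z -> Prop) lo hi U V :
  balanced (fun y => y = U \/ Zset Q y \/ y = V) ->
  Q lo -> Q hi -> (lo < hi)%Z -> (forall z, Q z -> lo <= z <= hi)%Z ->
  U < IZR lo -> IZR hi < V ->
  exists Uz Vz, U = IZR Uz /\ V = IZR Vz.
Proof.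
  intros Hbal Hlo Hhi Hlh Hbnd HU HV.
  set (P := fun y => y = U \/ Zset Q y \/ y = V) in Hbal.
  assert (Hlh' : IZR lo < IZR hi) by (apply IZR_lt, Hlh).
  assert (Hlow : forall y, P y -> y < IZR lo -> y = U).
  { intros y [Hy|[[z [-> Hz]]|Hy]] Hy'; auto.
    - apply lt_IZR in Hy'. specialize (Hbnd z Hz). lia.
    - lra. }
  assert (Hhigh : forall y, P y -> IZR hi < y -> y = V).
  { intros y [Hy|[[z [-> Hz]]|Hy]] Hy'; auto.
    - lra.
    - apply lt_IZR in Hy'. specialize (Hbnd z Hz). lia. }
  assert (PU : P U) by (left; reflexivity).
  assert (PV : P V) by (right; right; reflexivity).
  assert (Plo : P (IZR lo)) by (right; left; exists lo; auto).
  assert (Phi : P (IZR hi)) by (right; left; exists hi; auto).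
  assert (H1 : P (2 * IZR lo - U)).
  { destruct (Hbal _ Plo) as [L|R]; [apply L; auto|].
    exfalso. pose proof (Hlow _ (R _ PV ltac:(lra)) ltac:(lra)).
    pose proof (Hlow _ (R _ Phi Hlh') ltac:(lra)). lra. }
  assert (H2 : P (2 * IZR hi - V)).
  { destruct (Hbal _ Phi) as [L|R]; [|apply R; auto].
    exfalso. pose proof (Hhigh _ (L _ PU ltac:(lra)) ltac:(lra)).
    pose proof (Hhigh _ (L _ Plo Hlh') ltac:(lra)). lra. }
  destruct H1 as [H1|[[z1 [E1 _]]|H1]]; [lra| |];
  destruct H2 as [H2|[[z2 [E2 _]]|H2]]; try lra.
  - exists (2 * lo - z1)%Z, (2 * hi - (2 * lo - z1))%Z. rewrite <- !IZR_reflect. lra.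
  - exists (2 * lo - z1)%Z, (2 * hi - z2)%Z. rewrite <- !IZR_reflect. lra.
  - exists (2 * lo - (2 * hi - z2))%Z, (2 * hi - z2)%Z. rewrite <- !IZR_reflect. lra.
Qed.

Lemma evens_odds_extend_real c m c' m' U V :
  near_centred c m c' m' ->
  (forall z, evens_odds c m c' m' z -> U < IZR z < V) ->
  balanced (fun y => y = U \/ Zset (evens_odds c m c' m') y \/ y = V) ->
  exists c2 m2 c2' m2', near_centred c2 m2 c2' m2' /\
    forall y, y = U \/ Zset (evens_odds c m c' m') y \/ y = V <-> Zset (evens_odds c2 m2 c2' m2') y.
Proof.
  intros Hc Hbnd Hbal.
  set (lo := Z.min c c'). set (hi := Z.max (c + 2 * Z.of_nat m) (c' + 2 * Z.of_nat m')).
  assert (Hlohi : evens_odds c m c' m' lo /\ evens_odds c m c' m' hi /\ (lo < hi)%Z /\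
                  forall z, evens_odds c m c' m' z -> (lo <= z <= hi)%Z).
  { unfold lo, hi, near_centred, evens_odds, in_ap2 in *. Z.div_mod_to_equations.
    split; [lia|split; [lia|split; [lia|intros; lia]]]. }
  destruct Hlohi as (Hlo & Hhi & Hlt & Hin).
  destruct (balanced_ends_integral _ lo hi U V Hbal Hlo Hhi Hlt Hin
              (proj1 (Hbnd _ Hlo)) (proj2 (Hbnd _ Hhi))) as (Uz & Vz & -> & ->).
  assert (E : forall y, y = IZR Uz \/ Zset (evens_odds c m c' m') y \/ y = IZR Vz <->
                   Zset (fun z => z = Uz \/ evens_odds c m c' m' z \/ z = Vz) y).
  { intros y. unfold Zset. split.
    - intros [->|[[z [-> Hz]]| ->]]; eauto.
    - intros [z [-> [->|[Hz| ->]]]]; eauto. }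
  destruct (evens_odds_extend c m c' m' Uz Vz Hc) as (c2 & m2 & c2' & m2' & Hc2 & Hset).
  - intros z Hz. destruct (Hbnd z Hz). split; apply lt_IZR; assumption.
  - apply balanced_Zset_iff. exact (balanced_ext _ _ E Hbal).
  - exists c2, m2, c2', m2'. split; [exact Hc2|]. intros y. rewrite E.
    unfold Zset. split; intros [z [-> Hz]]; exists z; split; auto; apply Hset; exact Hz.
Qed.

Definition similar_to_evens_odds (P : R -> Prop) : Prop :=
  exists al be c m c' m', 0 < al /\ near_centred c m c' m' /\
    forall x, P x <-> Zset (evens_odds c m c' m') (al * x + be).

Lemma similar_to_evens_odds_ext (P P' : R -> Prop) :
  (forall x, P x <-> P' x) -> similar_to_evens_odds P -> similar_to_evens_odds P'.
Proof.
  intros E (al & be & c & m & c' & m' & Hal & Hc & HP).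
  exists al, be, c, m, c', m'. split; [exact Hal|split; [exact Hc|]].
  intros x. rewrite <- E. apply HP.
Qed.

Lemma balanced_strip_ends x0 xl (P : R -> Prop) :
  (forall x, P x -> x0 < x < xl) ->
  balanced (fun x => x = x0 \/ P x \/ x = xl) -> balanced P.
Proof.
  intros Hbnd Hbal b Hb. destruct (Hbnd b Hb) as [H0b Hbl].
  assert (Hrange : forall y, y = x0 \/ P y \/ y = xl -> x0 <= y <= xl)
    by (intros y [->|[Hy| ->]]; [|specialize (Hbnd y Hy)|]; lra).
  destruct (Hbal b (or_intror (or_introl Hb))) as [L|R]; [left|right]; intros a Ha Hab;
    destruct (Hbnd a Ha).
  - pose proof (Hrange _ (L x0 (or_introl eq_refl) H0b)).
    destruct (L a (or_intror (or_introl Ha)) Hab) as [E|[E|E]]; [lra|exact E|lra].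
  - pose proof (Hrange _ (R xl (or_intror (or_intror eq_refl)) Hbl)).
    destruct (R a (or_intror (or_introl Ha)) Hab) as [E|[E|E]]; [lra|exact E|lra].
Qed.

Lemma similar_to_evens_odds_extend x0 xl (P : R -> Prop) :
  (forall x, P x -> x0 < x < xl) ->
  balanced (fun x => x = x0 \/ P x \/ x = xl) ->
  similar_to_evens_odds P -> similar_to_evens_odds (fun x => x = x0 \/ P x \/ x = xl).
Proof.
  intros Hbnd Hbal (al & be & c & m & c' & m' & Hal & Hc & HP).
  assert (Hinv : forall x y, (y - be) / al = x <-> y = al * x + be)
    by (intros; split; intros E; subst; field; lra).
  assert (Hg : forall y, / al * y + - be / al = (y - be) / al) by (intros; field; lra).
  assert (Hfg : forall y, al * ((y - be) / al) + be = y) by (intros; field; lra).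
  assert (Hmono : forall x y, x < y -> al * x + be < al * y + be)
    by (intros; apply Rplus_lt_compat_r, Rmult_lt_compat_l; assumption).
  destruct (evens_odds_extend_real c m c' m' (al * x0 + be) (al * xl + be) Hc)
    as (c2 & m2 & c2' & m2' & Hc2 & Hset).
  - intros z Hz.
    assert (Hx : P ((IZR z - be) / al)) by (apply HP; rewrite Hfg; exists z; auto).
    rewrite <- (Hfg (IZR z)). destruct (Hbnd _ Hx). split; apply Hmono; assumption.
  - refine (balanced_ext _ _ _ (balanced_affine_preimage _ (/ al) (- be / al) _ Hbal)).
    + intros y. cbv beta. rewrite Hg, !Hinv, HP, Hfg. reflexivity.
    + apply Rinv_neq_0_compat. lra.
  - exists al, be, c2, m2, c2', m2'. split; [exact Hal|split; [exact Hc2|]]. intros x.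
    rewrite <- Hset, HP. split; intros [E|[E|E]]; auto.
    + left; subst; reflexivity.
    + right; right; subst; reflexivity.
    + left. apply Hinv in E. rewrite <- E. field. lra.
    + right; right. apply Hinv in E. rewrite <- E. field. lra.
Qed.

Lemma normalize_eq x0 x1 x k : x0 < x1 ->
  IZR k = / (x1 - x0) * x + - x0 / (x1 - x0) <-> x = x0 + IZR k * (x1 - x0).
Proof. intros H. split; intros E; [rewrite E|rewrite E]; field; lra. Qed.

Lemma Zset_finite (Q : Z -> Prop) (l : list Z) :
  (forall z, Q z <-> In z l) -> forall y, Zset Q y <-> In y (map IZR l).
Proof.
  intros HQ y. rewrite in_map_iff. unfold Zset.
  split; intros [z [E Hz]]; exists z; split; auto; apply HQ; auto.
Qed.

Lemma similar_two_points x0 x1 : x0 < x1 -> similar_to_evens_odds (fun x => x = x0 \/ x = x1).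
Proof.
  intros H. exists (/ (x1 - x0)), (- x0 / (x1 - x0)), 0%Z, 0%nat, 1%Z, 0%nat.
  split; [apply Rinv_0_lt_compat; lra|split; [unfold near_centred; simpl; repeat split; discriminate|]].
  intros x. rewrite (Zset_finite _ [0; 1]%Z).
  - simpl. rewrite !normalize_eq by exact H. split; intros [E|E]; lra.
  - intros z. unfold evens_odds, in_ap2. simpl. Z.div_mod_to_equations. lia.
Qed.

Lemma similar_three_points x0 x1 : x0 < x1 ->
  similar_to_evens_odds (fun x => x = x0 \/ x = x1 \/ x = 2 * x1 - x0).
Proof.
  intros H. exists (/ (x1 - x0)), (- x0 / (x1 - x0)), 0%Z, 1%nat, 1%Z, 0%nat.
  split; [apply Rinv_0_lt_compat; lra|split; [unfold near_centred; simpl; repeat split; discriminate|]].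
  intros x. rewrite (Zset_finite _ [0; 1; 2]%Z).
  - simpl. rewrite !normalize_eq by exact H. split; intros [E|[E|E]]; lra.
  - intros z. unfold evens_odds, in_ap2. simpl. Z.div_mod_to_equations. lia.
Qed.

Lemma similar_to_evens_odds_of_balanced_sorted s : StronglySorted Rlt s -> (2 <= length s)%nat ->
  balanced (fun x => In x s) -> similar_to_evens_odds (fun x => In x s).
Proof.
  remember (length s) as n eqn:Hn. revert s Hn.
  induction n as [n IH] using lt_wf_ind. intros s Hn Hs H2 Hbal.
  destruct s as [|x0 [|x1 [|x2 [|x3 rest]]]]; simpl in Hn; try lia;
    apply StronglySorted_inv in Hs as [Hs H0]; rewrite Forall_forall in H0.
  - assert (x0 < x1) by (apply H0; simpl; auto).
    refine (similar_to_evens_odds_ext _ _ _ (similar_two_points _ _ H)).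
    intros x; simpl; intuition (subst; auto).
  - apply StronglySorted_inv in Hs as [_ H1]. rewrite Forall_forall in H1.
    assert (x0 < x1) by (apply H0; simpl; auto).
    assert (x1 < x2) by (apply H1; simpl; auto).
    assert (E : x2 = 2 * x1 - x0).
    { destruct (Hbal x1 ltac:(simpl; auto)) as [L|R].
      - destruct (L x0 ltac:(simpl; auto) ltac:(assumption)) as [?|[?|[?|[]]]]; lra.
      - destruct (R x2 ltac:(simpl; auto) ltac:(assumption)) as [?|[?|[?|[]]]]; lra. }
    refine (similar_to_evens_odds_ext _ _ _ (similar_three_points _ _ H)).
    subst x2. intros x; simpl; intuition (subst; auto).
  - destruct (exists_last (l := x1 :: x2 :: x3 :: rest) ltac:(discriminate)) as (mid & xl & Emid).
    rewrite Emid in Hs, H0, Hbal |- *.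
    assert (Hlen : length (x1 :: x2 :: x3 :: rest) = S (length mid))
      by (rewrite Emid, length_app; simpl; lia).
    simpl in Hlen.
    destruct (StronglySorted_app_inv _ _ _ Hs) as (Hmid & _ & Hlast).
    assert (Hbnd : forall x, In x mid -> x0 < x < xl).
    { intros x Hx. split; [apply H0, in_or_app; auto|apply Hlast; simpl; auto]. }
    assert (Hin : forall x, In x (x0 :: mid ++ [xl]) <-> x = x0 \/ In x mid \/ x = xl).
    { intros x. simpl. rewrite in_app_iff. simpl. intuition (subst; auto). }
    apply (similar_to_evens_odds_ext _ _ (fun x => iff_sym (Hin x))).
    apply (balanced_ext _ _ Hin) in Hbal.
    apply similar_to_evens_odds_extend; [exact Hbnd|exact Hbal|].
    apply (IH (length mid)); [lia|reflexivity|exact Hmid|lia|].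
    exact (balanced_strip_ends _ _ _ Hbnd Hbal).
Qed.

Lemma similar_to_evens_odds_of_balanced V : NoDup V -> (2 <= length V)%nat ->
  balanced (fun x => In x V) -> similar_to_evens_odds (fun x => In x V).
Proof.
  intros ND H2 Hbal. destruct (sorted_permutation V ND) as [s [Hp Hs]].
  assert (Hmem : forall x, In x s <-> In x V)
    by (intros; split; apply Permutation_in; [symmetry| ]; exact Hp).
  apply (similar_to_evens_odds_ext _ _ Hmem), similar_to_evens_odds_of_balanced_sorted.
  - exact Hs.
  - rewrite <- (Permutation_length Hp). exact H2.
  - exact (balanced_ext _ _ (fun x => iff_sym (Hmem x)) Hbal).
Qed.

(** * Consecutive even and odd integers *)

Lemma length_consec_from c m : length (consec_from c m) = S m.
Proof. unfold consec_from. rewrite length_map, length_seq. reflexivity. Qed.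

Lemma NoDup_consec_from c m : NoDup (consec_from c m).
Proof.
  apply FinFun.Injective_map_NoDup; [|apply seq_NoDup].
  intros i j E. apply eq_IZR in E. lia.
Qed.

Lemma fold_right_Rplus_app l l' :
  fold_right Rplus 0 (l ++ l') = fold_right Rplus 0 l + fold_right Rplus 0 l'.
Proof. induction l as [|a l IH]; simpl; [ring|rewrite IH; ring]. Qed.

Lemma barycenter_consec_from c m : barycenter (consec_from c m) = IZR (c + Z.of_nat m).
Proof.
  unfold barycenter. rewrite length_consec_from.
  assert (Hsum : fold_right Rplus 0 (consec_from c m) = INR (S m) * IZR (c + Z.of_nat m)).
  { unfold consec_from. induction m as [|m IH].
    - simpl. rewrite Z.add_0_r. ring.
    - rewrite seq_S, map_app, fold_right_Rplus_app, IH. cbn [map fold_right].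
      rewrite Nat.add_0_l, !plus_IZR, !mult_IZR, Nat2Z.inj_succ, succ_IZR, !S_INR, INR_IZR_INZ.
      ring. }
  rewrite Hsum. field. apply not_0_INR. discriminate.
Qed.

Lemma in_consec_from_evens_odds c m c' m' y :
  In y (consec_from c m) \/ In y (consec_from c' m') <-> Zset (evens_odds c m c' m') y.
Proof.
  rewrite !In_consec_from. unfold Zset, evens_odds.
  split; [intros [[z [-> H]]|[z [-> H]]]|intros [z [-> [H|H]]]]; eauto.
Qed.

Lemma length_affine_image al be V W : al <> 0 -> NoDup V -> NoDup W ->
  (forall y, In y (map (fun x => al * x + be) V) <-> In y W) -> length V = length W.
Proof.
  intros Hal NDV NDW HVW. rewrite <- (length_map (fun x => al * x + be)).
  apply Permutation_length, NoDup_Permutation; [|exact NDW|exact HVW].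
  apply FinFun.Injective_map_NoDup; [|exact NDV].
  intros x y E. apply (Rmult_eq_reg_l al); [lra|exact Hal].
Qed.

Lemma length_image_evens_odds al be V c m c' m' : al <> 0 -> NoDup V ->
  Z.Even c -> Z.Odd c' ->
  (forall y, In y (map (fun x => al * x + be) V) <->
             In y (consec_from c m) \/ In y (consec_from c' m')) ->
  length V = (S m + S m')%nat.
Proof.
  intros Hal ND Hc Hc' HV. rewrite <- (length_consec_from c m), <- (length_consec_from c' m'),
    <- length_app.
  apply (length_affine_image al be); [exact Hal|exact ND| |].
  - apply NoDup_app; try apply NoDup_consec_from.
    intros y Hy Hy'. apply In_consec_from in Hy as [z [-> [_ Hz]]].
    apply In_consec_from in Hy' as [z' [E [_ Hz']]]. apply eq_IZR in E. subst z'.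
    destruct Hc as [k ->], Hc' as [k' ->]. Z.div_mod_to_equations. lia.
  - intros y. rewrite in_app_iff. apply HV.
Qed.

Lemma Z_Even_mod2 c : Z.Even c <-> (c mod 2 = 0)%Z.
Proof.
  split; [intros [k ->]|intros H; exists (c / 2)%Z]; Z.div_mod_to_equations; lia.
Qed.

Lemma Z_Odd_mod2 c : Z.Odd c <-> (c mod 2 = 1)%Z.
Proof.
  split; [intros [k ->]|intros H; exists (c / 2)%Z]; Z.div_mod_to_equations; lia.
Qed.

Lemma near_centred_iff c m c' m' :
  near_centred c m c' m' <-> Z.Even c /\ Z.Odd c' /\
    (if Nat.odd (S m + S m') then concentric (consec_from c m) (consec_from c' m')
     else nearly_concentric (consec_from c m) (consec_from c' m')).
Proof.
  unfold near_centred, concentric, nearly_concentric.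
  rewrite Z_Even_mod2, Z_Odd_mod2, !barycenter_consec_from, <- minus_IZR, Rabs_Zabs.
  destruct (Nat.odd (S m + S m')) eqn:Eo.
  - apply Nat.odd_spec in Eo as [k Hk].
    assert (E : forall x y, IZR x = IZR y <-> x = y) by (split; [apply eq_IZR|intros ->; reflexivity]).
    rewrite E. split; intros (? & ? & ?); repeat split; try assumption; Z.div_mod_to_equations; lia.
  - assert (Ev : Nat.Even (S m + S m')) by (apply Nat.even_spec; rewrite <- Nat.negb_odd, Eo; reflexivity).
    destruct Ev as [k Hk].
    assert (E : forall x, IZR x = 1 <-> x = 1%Z) by (split; [apply eq_IZR|intros ->; reflexivity]).
    rewrite E. split; intros (? & ? & ?); repeat split; try assumption; Z.div_mod_to_equations; lia.
Qed.

Theorem mainTheorem7 (n : nat) (V : list R) :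
  (3 <= n)%nat -> NoDup V -> length V = n ->
  (optimal3 V <->
   exists (f : R -> R) (E O : list R),
     similarity f /\ consec_even E /\ consec_odd O /\
     (forall y, In y (map f V) <-> In y E \/ In y O) /\
     (if Nat.odd n then concentric E O else nearly_concentric E O)).
Proof.
  intros Hn ND Hl. rewrite optimal3_iff_balanced by exact ND. split.
  - intros Hbal.
    destruct (similar_to_evens_odds_of_balanced V ND ltac:(lia) Hbal)
      as (al & be & c & m & c' & m' & Hal & Hnc & HV).
    rewrite in_map_affine_iff in HV by lra.
    setoid_rewrite <- in_consec_from_evens_odds in HV.
    apply near_centred_iff in Hnc as (Hc & Hc' & Hcentre).
    rewrite <- Hl, (length_image_evens_odds al be V c m c' m' ltac:(lra) ND Hc Hc' HV).
    exists (fun x => al * x + be), (consec_from c m), (consec_from c' m').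
    split; [exists al, be; split; [lra|reflexivity]|].
    split; [exists c, m; auto|]. split; [exists c', m'; auto|]. auto.
  - intros (f & E & O & (al & be & Hal & Hf) & (c & m & Hc & ->) & (c' & m' & Hc' & ->) & HV & Hcentre).
    rewrite (map_ext f (fun x => al * x + be) Hf) in HV.
    rewrite <- Hl, (length_image_evens_odds al be V c m c' m' Hal ND Hc Hc' HV) in Hcentre.
    setoid_rewrite in_consec_from_evens_odds in HV. rewrite <- in_map_affine_iff in HV by exact Hal.
    apply (balanced_ext _ _ (fun x => iff_sym (HV x))), balanced_affine_preimage; [exact Hal|].
    apply balanced_Zset_iff, evens_odds_balanced, near_centred_iff. auto.
Qed.
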